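(* Let $\mathcal{G}$ be a multi-layer graph with $l$ layers, $d,s,k\in\mathbb{N}$ with $k\ge1$, and $\mathcal{R}$ a collection of exactly $k$ subsets of $V(\mathcal{G})$. Let $L\subseteq\{1,\dots,l\}$ with $|L|>s$, and let $U$ be a potential vertex set for $L$, i.e., $C^d_S(\mathcal{G})\subseteq U$ for every top-down descendant $S$ of $L$ with $|S|=s$. Suppose $|\mathsf{Cov}((\mathcal{R}-\{C^*(\mathcal{R})\})\cup\{C^d_L(\mathcal{G})\})|\ge(1+\frac1k)|\mathsf{Cov}(\mathcal{R})|$ and $|U|<(\frac1k+\frac1{k^2})|\mathsf{Cov}(\mathcal{R})|+(1+\frac1k)|\Delta(\mathcal{R},C^*(\mathcal{R}))|$. Let $S_1,S_2$ be top-down descendants of $L$ with $|S_1|=|S_2|=s$ and $C^d_{S_1}(\mathcal{G})\neq C^d_{S_2}(\mathcal{G})$. If $C^d_{S_1}(\mathcal{G})$ satisfies $|\mathsf{Cov}((\mathcal{R}-\{C^*(\mathcal{R})\})\cup\{C^d_{S_1}(\mathcal{G})\})|\ge(1+\frac1k)|\mathsf{Cov}(\mathcal{R})|$ and $\mathcal{R}'=(\mathcal{R}-\{C^*(\mathcal{R})\})\cup\{C^d_{S_1}(\mathcal{G})\}$ is the updated collection, then $|\mathsf{Cov}((\mathcal{R}'-\{C^*(\mathcal{R}')\})\cup\{C^d_{S_2}(\mathcal{G})\})|<(1+\frac1k)|\mathsf{Cov}(\mathcal{R}')|$, i.e., $C^d_{S_2}(\mathcal{G})$ cannot update $\mathc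al{R}'$.
   Context: A multi-layer graph $\mathcal{G}=(V,E_1,\dots,E_l)$ consists of a finite vertex set $V$ and edge sets $E_i$ of simple undirected graphs $G_i=(V,E_i)$. A graph is $d$-dense if every vertex has degree at least $d$; the $d$-coherent core $C^d_L(\mathcal{G})$ is the unique maximal $S\subseteq V$ such that the induced subgraph $G_i[S]$ is $d$-dense for all $i\in L$. Top-down search tree: $L$ is the parent of $L'$ if $L'=L-\{\ell\}$ for some $\ell\in L$ with $\ell>\max(\{1,\dots,l\}-L)$ ($\max(\emptyset)=-\infty$); top-down descendants are obtained by iterating the child relation. For a collection $\mathcal{R}$ of sets, $\mathsf{Cov}(\mathcal{R})=\bigcup_{R\in\mathcal{R}}R$; for $C'\in\mathcal{R}$, $\Delta(\mathcal{R},C')=C'-\mathsf{Cov}(\mathcal{R}-\{C'\})$; $C^*(\mathcal{R})$ is a fixed element of $\mathcal{R}$ minimizing $|\Delta(\mathcal{R},C')|$. A set $C$ ''updates'' a $k$-element collection $\mathcal{R}$ if $|\mathsf{Cov}((\mathcal{R}-\{C^*(\mathcal{R})\})\cup\{C\})|\ge(1+\frac1k)|\mathsf{Cov}(\mathcal{R})|$, in which case $C^*(\mathcal{R})$ is replaced by $C$. *)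

From mathcomp Require Import all_boot all_order all_algebra.
Set Implicit Arguments. Unset Strict Implicit. Unset Printing Implicit Defensive.

(* A multi-layer graph on vertex set V (a finType) with l layers is given by
   E : 'I_l -> rel V, each E i being the adjacency relation of a simple
   undirected graph (symmetric and irreflexive; imposed as hypotheses).
   Layers are indexed by 'I_l = {0,...,l-1} instead of {1,...,l}; the order
   is preserved so the top-down tree is the same up to the shift. *)

Definition simple_layers (V : finType) (l : nat) (E : 'I_l -> rel V) : Prop :=
  forall i : 'I_l, symmetric (E i) /\ irreflexive (E i).

Definition dense_in (V : finType) (e : rel V) (d : nat) (S : {set V}) : bool :=
  [forall v in S, d <= #|[set u in S | e v u]|].

Definition coherent (V : finType) (l : nat) (E : 'I_l -> rel V) (d : nat)
  (L : {set 'I_l}) (S : {set V}) : bool :=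
  [forall i in L, dense_in (E i) d S].

(* The d-coherent core: the (unique) maximal S that is coherent for L.
   We pick a maximal one (uniqueness is a fact about it). *)
Definition core (V : finType) (l : nat) (E : 'I_l -> rel V) (d : nat)
  (L : {set 'I_l}) : {set V} :=
  odflt set0 [pick S : {set V} | coherent E d L S &&
     [forall T : {set V}, (coherent E d L T && (S \subset T)) ==> (T == S)]].

Definition td_child (l : nat) (L L' : {set 'I_l}) : bool :=
  [exists x in L, (L' == L :\ x) && [forall j : 'I_l, (j \notin L) ==> (j < x)]].

Definition td_desc (l : nat) (L S : {set 'I_l}) : bool :=
  connect (@td_child l) L S.

Definition Cov (V : finType) (R : {set {set V}}) : {set V} :=
  \bigcup_(C in R) C.

Definition Delta (V : finType) (R : {set {set V}}) (C : {set V}) : {set V} :=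
  C :\: Cov (R :\ C).

Definition is_Cstar (V : finType) (cstar : {set {set V}} -> {set V}) : Prop :=
  forall R : {set {set V}}, R != set0 ->
    cstar R \in R /\
    (forall C, C \in R -> #|Delta R (cstar R)| <= #|Delta R C|)%N.

Definition replaced (V : finType) (cstar : {set {set V}} -> {set V})
  (R : {set {set V}}) (C : {set V}) : {set {set V}} :=
  (R :\ cstar R) :|: [set C].

Local Open Scope ring_scope.

Definition updates (V : finType) (cstar : {set {set V}} -> {set V}) (k : nat)
  (R : {set {set V}}) (C : {set V}) : bool :=
  (1 + k%:R^-1) * (#|Cov R|%:R : rat) <= (#|Cov (replaced cstar R C)|%:R : rat).

From mathcomp Require Import all_boot all_order all_algebra.
From mathcomp Require Import lra.
Set Implicit Arguments. Unset Strict Implicit. Unset Printing Implicit Defensive.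
Import Order.TTheory GRing.Theory Num.Theory.
Local Open Scope ring_scope.

(* Write t = 1/k, c = |Cov R|, delta = |Delta(R, C0)| with C0 = cstar R, and
   A = Cov (R - {C0}).  Since |Cov R| = |A| + delta, a set C updates R iff
   |C - A| >= t c + delta.  Suppose C1 updates R and C2 updates R', and let
   D = cstar R', B = Cov (R' - {D}).  The new parts C1 - A and C2 - B have
   total size at most |C1 u C2| + |Delta(R', D)| <= |U| + delta': either
   D <> C1, and then C1 lies in B, or D = C1, and then B is contained in A,
   so the private part of D contains C1 - A.  Adding up the two update
   inequalities and using |Cov R'| >= (1 + t) c and delta <= c gives
   |U| >= (t + t^2) c + (1 + t) delta, against the size bound on U.
   Of the cores only the inclusions C_{S_1}, C_{S_2} <= U are used, and of
   the choice function cstar only that cstar R lies in R. *)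

Lemma card_setU_setD (T : finType) (A C : {set T}) :
  #|A :|: C| = (#|A| + #|C :\: A|)%N.
Proof. by rewrite cardsU -(cardsID A C) addnCA setIC addKn. Qed.

Section Cover.

Variable V : finType.
Implicit Types (R : {set {set V}}) (C D : {set V}).

Lemma sub_Cov R C : C \in R -> C \subset Cov R.
Proof. exact: bigcup_sup. Qed.

Lemma CovS R R' : R \subset R' -> Cov R \subset Cov R'.
Proof. by move=> sRR'; apply/bigcupsP=> C /(subsetP sRR') /sub_Cov. Qed.

Lemma Cov_setU1 R C : Cov (R :|: [set C]) = Cov R :|: C.
Proof. by rewrite /Cov bigcup_setU big_set1. Qed.

Lemma card_Cov_setD1 R C : C \in R -> #|Cov R| = (#|Cov (R :\ C)| + #|Delta R C|)%N.
Proof.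
by move=> CR; rewrite /Delta -card_setU_setD /Cov (big_setD1 _ CR) setUC.
Qed.

Lemma card_new_parts R0 C1 C2 D :
  (#|C1 :\: Cov R0| + #|C2 :\: Cov ((R0 :|: [set C1]) :\ D)|
    <= #|C1 :|: C2| + #|Delta (R0 :|: [set C1]) D|)%N.
Proof.
set R' := R0 :|: [set C1]; have [->|D_neq_C1] := eqVneq D C1.
  have sub_R0 : R' :\ C1 \subset R0.
    by apply/subsetP=> C; rewrite !inE => /andP[/negPf-> /orP[]].
  rewrite addnC leq_add //; apply: subset_leq_card.
  - by rewrite setDE subIset // subsetUr.
  - exact/setDS/CovS.
have C1_cov : C1 \subset Cov (R' :\ D).
  by apply: sub_Cov; rewrite !inE eq_sym D_neq_C1 eqxx orbT.
rewrite card_setU_setD -addnA leq_add ?subset_leq_card ?subsetDl //.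
apply: leq_trans (leq_addr _ _); apply/subset_leq_card/setDS/C1_cov.
Qed.

Variable cstar : {set {set V}} -> {set V}.
Hypothesis cstar_in : forall R, R != set0 -> cstar R \in R.

Lemma card_Cov_replaced R C :
  #|Cov (replaced cstar R C)|
    = (#|Cov (R :\ cstar R)| + #|C :\: Cov (R :\ cstar R)|)%N.
Proof. by rewrite Cov_setU1 card_setU_setD. Qed.

Lemma updatesE k R C : R != set0 ->
  updates cstar k R C =
  (k%:R^-1 * #|Cov R|%:R + #|Delta R (cstar R)|%:R
     <= (#|C :\: Cov (R :\ cstar R)|%:R : rat)).
Proof.
move=> R_neq0; rewrite /updates card_Cov_replaced.
rewrite (card_Cov_setD1 (cstar_in R_neq0)) !natrD.
by apply/idP/idP => ?; lra.
Qed.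

Lemma no_update_after_update k R (U C1 C2 : {set V}) :
  R != set0 -> C1 \subset U -> C2 \subset U ->
  (#|U|%:R : rat) < (k%:R^-1 + (k%:R ^+ 2)^-1) * #|Cov R|%:R
                    + (1 + k%:R^-1) * #|Delta R (cstar R)|%:R ->
  updates cstar k R C1 -> ~~ updates cstar k (replaced cstar R C1) C2.
Proof.
set R' := replaced cstar R C1 => R_neq0 C1_U C2_U.
have R'_neq0 : R' != set0 by apply/set0Pn; exists C1; rewrite !inE eqxx orbT.
rewrite -exprVn !updatesE //; set t : rat := k%:R^-1 => U_small upd1.
apply/negP => upd2.
have C12_U : C1 :|: C2 \subset U by rewrite subUset C1_U.
have new_parts_U := leq_trans (card_new_parts (R :\ cstar R) C1 C2 (cstar R'))
  (leq_add (subset_leq_card C12_U) (leqnn _)).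
rewrite -/R' -(ler_nat rat) !natrD in new_parts_U.
have card_Cov_R := card_Cov_setD1 (cstar_in R_neq0).
have card_Cov_R' := card_Cov_replaced R C1; rewrite -/R' in card_Cov_R'.
have t_ge0 : 0 <= t by rewrite invr_ge0.
have delta_le_c : (#|Delta R (cstar R)|%:R : rat) <= #|Cov R|%:R.
  by rewrite ler_nat card_Cov_R leq_addl.
have cover_grows : (1 + t) * #|Cov R|%:R <= (#|Cov R'|%:R : rat).
  by rewrite card_Cov_R' card_Cov_R !natrD in upd1 *; lra.
have := ler_wpM2l t_ge0 cover_grows; have := ler_wpM2l t_ge0 delta_le_c.
lra.
Qed.

End Cover.

Theorem lemma7 (V : finType) (l : nat) (E : 'I_l -> rel V)
  (cstar : {set {set V}} -> {set V}) (d s k : nat)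
  (R : {set {set V}}) (L : {set 'I_l}) (U : {set V}) (S1 S2 : {set 'I_l}) :
  simple_layers E ->
  is_Cstar cstar ->
  (1 <= k)%N ->
  #|R| = k ->
  (s < #|L|)%N ->
  (forall S : {set 'I_l}, td_desc L S -> #|S| = s -> core E d S \subset U) ->
  updates cstar k R (core E d L) ->
  (#|U|%:R : rat) < (k%:R^-1 + (k%:R ^+ 2)^-1) * #|Cov R|%:R
                    + (1 + k%:R^-1) * #|Delta R (cstar R)|%:R ->
  td_desc L S1 -> td_desc L S2 -> #|S1| = s -> #|S2| = s ->
  core E d S1 != core E d S2 ->
  updates cstar k R (core E d S1) ->
  let R' := replaced cstar R (core E d S1) in
  ~~ updates cstar k R' (core E d S2).
Proof.
move=> _ cstarP k_gt0 card_R _ cores_U _ U_small desc1 desc2 card1 card2 _ upd1.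
have cstar_in Q : Q != set0 -> cstar Q \in Q by case/cstarP.
have R_neq0 : R != set0 by rewrite -card_gt0 card_R.
by apply: (no_update_after_update cstar_in R_neq0 _ _ U_small upd1); apply: cores_U.
Qed.
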